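(* For every principal $n$, every privilege $p\in\mathcal{A}(n)$, and every expression $e$ with $D\vdash e:t$, we have for all principals $n'$, all $P\subseteq\mathsf{Privileges}$ and all $h\in[\![D]\!]$: $[\![\mathtt{signs}\ n\ (\mathtt{check}\ p\ \mathtt{for}\ e)]\!]\,n'\,P\,h=[\![\mathtt{check}\ p\ \mathtt{for}\ (\mathtt{signs}\ n\ e)]\!]\,n'\,P\,h$.
   Context: Fix sets $\mathsf{Principals}$ and $\mathsf{Privileges}$ and an access control list $\mathcal{A}:\mathsf{Principals}\to\mathcal{P}(\mathsf{Privileges})$. Language. Types: $t::=\mathtt{bool}\mid t_1\to t_2$. Expressions: $e::=\mathtt{true}\mid x\mid \mathtt{if}\ e\ \mathtt{then}\ e_1\ \mathtt{else}\ e_2\mid \lambda x.e\mid e_1\,e_2\mid \mathtt{letrec}\ f(x)=e_1\ \mathtt{in}\ e_2\mid \mathtt{signs}\ n\ e\mid \mathtt{dopriv}\ p\ \mathtt{in}\ e\mid \mathtt{check}\ p\ \mathtt{for}\ e\mid \mathtt{test}\ p\ \mathtt{then}\ e_1\ \mathtt{else}\ e_2$ ($n$ a principal, $p$ a privilege). Typing $D\vdash e:t$ is simply typed: $\mathtt{letrec}$ typed by $D,f:t_1\to t_2,x:t_1\vdash e_1:t_2$ and $D,f:t_1\to t_2\vdash e_2:t$; $\mathtt{signs},\mathtt{dopriv},\mathtt{check}$ preserve the body type; $\mathtt{test}$, $\mathtt{if}$ need branches of a common type ($\mathtt{if}$ a $\mathtt{bool}$ guard). Eager semantics. $\bot,\star$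 are two distinct values, neither booleans nor functions. For a cpo $C$, $C_{\bot\star}=C\cup\{\bot,\star\}$ with $u\le v$ iff $u=\bot$ or $u=v$ or $u,v\in C$, $u\le v$. $[\![\mathtt{bool}]\!]=\{\mathsf{true},\mathsf{false}\}$ and $\mathcal{P}(\mathsf{Privileges})$ ordered by equality; $[\![t_1\to t_2]\!]=\mathcal{P}(\mathsf{Privileges})\to[\![t_1]\!]\to[\![t_2]\!]_{\bot\star}$ (continuous, pointwise order). $[\![D]\!]$: records $h$ with $h.x\in[\![D(x)]\!]$. $[\![D\vdash e:t]\!]\in\mathsf{Principals}\to\mathcal{P}(\mathsf{Privileges})\to[\![D]\!]\to[\![t]\!]_{\bot\star}$, written $[\![e]\!]nPh$. ''let $d=E_1$ in $E_2$'' yields $E_1$ if $E_1\in\{\bot,\star\}$, else $E_2$ with $d:=E_1$. $P\sqcup_n\{p\}$ is $P\cup\{p\}$ if $p\in\mathcal{A}(n)$, else $P$. Equations: $[\![\mathtt{true}]\!]nPh=\mathsf{true}$; $[\![x]\!]nPh=h.x$; $[\![\mathtt{if}\ e\ \mathtt{then}\ e_1\ \mathtt{else}\ e_2]\!]nPh=$ let $b=[\![e]\!]nPh$ in (if $b$ then $[\![e_1]\!]nPh$ else $[\![e_2]\!]nPh$); $[\![\lambda x.e]\!]nPh=\lambda P'.\lambda d.[\![e]\!]nP'(h[x\mapsto d])$; $[\![e_1e_2]\!]nPh=$ let $f=[\![e_1]\!]nPh$ in let $d=[\![e_2]\!]nPh$ in $fPd$; $[\![\mathtt{letrec}\ f(x)=e_1\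 \mathtt{in}\ e_2]\!]nPh=[\![e_2]\!]nP(h[f\mapsto\mathit{fix}\,G])$ with $G(g)=\lambda P'.\lambda d.[\![e_1]\!]nP'(h[f\mapsto g,x\mapsto d])$ (least fixed point); $[\![\mathtt{signs}\ n'\ e]\!]nPh=[\![e]\!]n'(P\cap\mathcal{A}(n'))h$; $[\![\mathtt{dopriv}\ p\ \mathtt{in}\ e]\!]nPh=[\![e]\!]n(P\sqcup_n\{p\})h$; $[\![\mathtt{check}\ p\ \mathtt{for}\ e]\!]nPh=$ if $p\in P$ then $[\![e]\!]nPh$ else $\star$; $[\![\mathtt{test}\ p\ \mathtt{then}\ e_1\ \mathtt{else}\ e_2]\!]nPh=$ if $p\in P$ then $[\![e_1]\!]nPh$ else $[\![e_2]\!]nPh$. *)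

From Stdlib Require Import List Arith Classical ClassicalEpsilon.

Set Implicit Arguments.

Definition chain {X : Type} (le : X -> X -> Prop) (c : nat -> X) : Prop :=
  forall k, le (c k) (c (S k)).

Definition is_lub {X : Type} (le : X -> X -> Prop) (c : nat -> X) (l : X) : Prop :=
  (forall k, le (c k) l) /\ (forall u, (forall k, le (c k) u) -> le l u).

Definition continuous {X Y : Type} (leX : X -> X -> Prop) (leY : Y -> Y -> Prop)
  (f : X -> Y) : Prop :=
  (forall x y, leX x y -> leY (f x) (f y)) /\
  (forall c l, chain leX c -> is_lub leX c l -> is_lub leY (fun k => f (c k)) (f l)).

Inductive lift (X : Type) : Type :=
| Bot : lift X
| Star : lift X
| Val : X -> lift X.
Arguments Bot {X}.
Arguments Star {X}.

Definition lift_le {X : Type} (le : X -> X -> Prop) (u v : lift X) : Prop :=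
  u = Bot \/ u = v \/ exists a b, u = Val a /\ v = Val b /\ le a b.

Definition bind {X Y : Type} (u : lift X) (k : X -> lift Y) : lift Y :=
  match u with Bot => Bot | Star => Star | Val a => k a end.

Inductive ty : Type :=
| TBool : ty
| TArr : ty -> ty -> ty.

Definition var := nat.

Definition ctx := list (var * ty).

Fixpoint lookup (D : ctx) (x : var) : option ty :=
  match D with
  | nil => None
  | (y, t) :: D' => if Nat.eqb x y then Some t else lookup D' x
  end.

Section Lang.
Variables (Principal Privilege : Type).

Inductive expr : Type :=
| ETrue : expr
| EVar : var -> expr
| EIf : expr -> expr -> expr -> expr
| ELam : var -> expr -> expr
| EApp : expr -> expr -> expr
| ELetrec : var -> var -> expr -> expr -> expr   (* letrec f(x) = e1 in e2 *)
| ESigns : Principal -> expr -> expr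
| EDopriv : Privilege -> expr -> expr
| ECheck : Privilege -> expr -> expr
| ETest : Privilege -> expr -> expr -> expr.

(* D |- e : t   (in Type, so that the semantics can recurse on derivations) *)
Inductive has_type : ctx -> expr -> ty -> Type :=
| T_true : forall D, has_type D ETrue TBool
| T_var : forall D x t, lookup D x = Some t -> has_type D (EVar x) t
| T_if : forall D e e1 e2 t,
    has_type D e TBool -> has_type D e1 t -> has_type D e2 t ->
    has_type D (EIf e e1 e2) t
| T_lam : forall D x e t1 t2,
    has_type ((x, t1) :: D) e t2 -> has_type D (ELam x e) (TArr t1 t2)
| T_app : forall D e1 e2 t1 t2,
    has_type D e1 (TArr t1 t2) -> has_type D e2 t1 -> has_type D (EApp e1 e2) t2
| T_letrec : forall D f x e1 e2 t1 t2 t,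
    has_type ((x, t1) :: (f, TArr t1 t2) :: D) e1 t2 ->
    has_type ((f, TArr t1 t2) :: D) e2 t ->
    has_type D (ELetrec f x e1 e2) t
| T_signs : forall D n e t, has_type D e t -> has_type D (ESigns n e) t
| T_dopriv : forall D p e t, has_type D e t -> has_type D (EDopriv p e) t
| T_check : forall D p e t, has_type D e t -> has_type D (ECheck p e) t
| T_test : forall D p e1 e2 t,
    has_type D e1 t -> has_type D e2 t -> has_type D (ETest p e1 e2) t.

(* subsets of Privileges; P(Privileges) is ordered by equality *)
Definition pset := Privilege -> Prop.

Record Poset := { car :> Type; rel : car -> car -> Prop }.

(* Since P(Privileges) is discretely ordered, continuity
   amounts to continuity of each f P. *)
Fixpoint den (t : ty) : Poset :=
  match t with
  | TBool => {| car := bool; rel := @eq bool |}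
  | TArr a b =>
      {| car := { f : pset -> car (den a) -> lift (car (den b))
                | forall P, continuous (rel (den a)) (lift_le (rel (den b))) (f P) };
         rel := fun f g => forall P d,
                  lift_le (rel (den b)) (proj1_sig f P d) (proj1_sig g P d) |}
  end.

Definition opt_den (o : option ty) : Type :=
  match o with None => unit | Some t => car (den t) end.

Definition env (D : ctx) : Type := forall x, opt_den (lookup D x).

Definition env_upd (D : ctx) (h : env D) (x : var) (t : ty) (d : car (den t))
  : env ((x, t) :: D) :=
  fun y => match Nat.eqb y x as b
                 return opt_den (if b then Some t else lookup D y) with
           | true => d
           | false => h y
           end.

Definition env_get (o : option ty) (t : ty) (E : o = Some t) (v : opt_den o)
  : car (den t) :=
  match E in _ = o' return opt_den o' with eq_refl => v end.

Lemma bot_fun_continuous (a b : ty) (P : pset) :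
  continuous (rel (den a)) (lift_le (rel (den b)))
    (fun (_ : car (den a)) => @Bot (car (den b))).
Proof.
  split.
  - intros; left; reflexivity.
  - intros c l _ _; split.
    + intros k; left; reflexivity.
    + intros u _; left; reflexivity.
Qed.

Definition bot_fun (a b : ty) : car (den (TArr a b)) :=
  exist _ (fun _ _ => Bot) (bot_fun_continuous a b).

(* packaging a raw function as an element of [[a -> b]]; the semantic
   functions built below are continuous, the default branch is never used *)
Definition mk_fun (a b : ty) (f : pset -> car (den a) -> lift (car (den b)))
  : car (den (TArr a b)) :=
  match excluded_middle_informative
          (forall P, continuous (rel (den a)) (lift_le (rel (den b))) (f P)) with
  | left H => exist _ f H
  | right _ => bot_fun a b
  end.

Definition is_least_fixpoint (X : Poset) (G : X -> X) (g : X) : Prop :=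
  G g = g /\ forall g', G g' = g' -> rel X g g'.

Definition fixp (a b : ty) (G : car (den (TArr a b)) -> car (den (TArr a b)))
  : car (den (TArr a b)) :=
  match excluded_middle_informative (exists g, is_least_fixpoint (den (TArr a b)) G g) with
  | left H => proj1_sig (constructive_indefinite_description _ H)
  | right _ => bot_fun a b
  end.

Variable ACL : Principal -> pset.

Definition pset_inter (P Q : pset) : pset := fun q => P q /\ Q q.

Definition pset_join (n : Principal) (P : pset) (p : Privilege) : pset :=
  if excluded_middle_informative (ACL n p) then (fun q => P q \/ q = p) else P.

Fixpoint sem (D : ctx) (e : expr) (t : ty) (de : has_type D e t)
  : Principal -> pset -> env D -> lift (car (den t)) :=
  match de in has_type D e t return Principal -> pset -> env D -> lift (car (den t)) with
  | @T_true _ => fun n P h => Val true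
  | @T_var D x t E => fun n P h => Val (env_get E (h x))
  | @T_if _ _ _ _ _ d0 d1 d2 => fun n P h =>
      bind (sem d0 n P h) (fun b : bool => if b then sem d1 n P h else sem d2 n P h)
  | @T_lam D x e t1 t2 d => fun n P h =>
      Val (mk_fun t1 t2 (fun P' dd => sem d n P' (env_upd h x t1 dd)))
  | @T_app D e1 e2 t1 t2 d1 d2 => fun n P h =>
      bind (sem d1 n P h) (fun f =>
        bind (sem d2 n P h) (fun dd => proj1_sig f P dd))
  | @T_letrec D f x e1 e2 t1 t2 t d1 d2 => fun n P h =>
      let G := fun g => mk_fun t1 t2 (fun P' dd =>
                 sem d1 n P' (env_upd (env_upd h f (TArr t1 t2) g) x t1 dd)) in
      sem d2 n P (env_upd h f (TArr t1 t2) (fixp G))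
  | @T_signs _ n' _ _ d => fun n P h => sem d n' (pset_inter P (ACL n')) h
  | @T_dopriv _ p _ _ d => fun n P h => sem d n (pset_join n P p) h
  | @T_check _ p _ _ d => fun n P h =>
      if excluded_middle_informative (P p) then sem d n P h else Star
  | @T_test _ p _ _ _ d1 d2 => fun n P h =>
      if excluded_middle_informative (P p) then sem d1 n P h else sem d2 n P h
  end.

End Lang.

Arguments ETrue {Principal Privilege}.
Arguments EVar {Principal Privilege}.

From Stdlib Require Import ClassicalEpsilon.

(* Signing by [n] intersects the privileges with [ACL n], which does not
   affect [p] since [p] is in [ACL n]; so both sides check [p] against [P]. *)

Lemma pset_inter_mem_r {Privilege : Type} (P : pset Privilege) {Q : pset Privilege}
  {p : Privilege} :
  Q p -> (pset_inter P Q p <-> P p).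
Proof. now intros Qp; split; [intros [Pp _] | intros Pp; split]. Qed.

Theorem theorem3 (Principal Privilege : Type) (ACL : Principal -> pset Privilege)
  (n : Principal) (p : Privilege) (Hp : ACL n p)
  (D : ctx) (e : expr Principal Privilege) (t : ty) (de : has_type D e t)
  (n' : Principal) (P : pset Privilege) (h : env Privilege D) :
  sem ACL (T_signs n (T_check p de)) n' P h
  = sem ACL (T_check p (T_signs n de)) n' P h.
Proof.
  pose proof (pset_inter_mem_r P Hp) as Hiff.
  simpl.
  destruct (excluded_middle_informative (pset_inter P (ACL n) p)) as [Hin|Hout];
    destruct (excluded_middle_informative (P p)) as [HP|HnP];
    tauto || reflexivity.
Qed.
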